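(* Let $(H_i<G_i)_{i\in\mathbb N}$ be a sequence of inclusions of groups, let $\omega$ be a free ultrafilter on $\mathbb N$, and let $\mathbf G=\prod_\omega G_i$ and $\mathbf H=\prod_\omega H_i$ be algebraic ultraproducts. Then $\ast_{\mathbf H}\mathbf G$ naturally embeds into the algebraic ultraproduct $\mathbf K=\prod_\omega \ast_{H_i}G_i$.
   Context: For a sequence of groups $(L_i)$ and a free ultrafilter $\omega$ on $\mathbb N$, the algebraic ultraproduct is $\prod_\omega L_i=(\prod_{i\in\mathbb N}L_i)/N$ where $N=\{(g_i): \{i: g_i=1\}\in\omega\}$. For a group $G$ and subgroup $H<G$, $\ast_H G$ denotes the amalgamated free product of countably infinitely many copies of $G$ over the common subgroup $H$. *)

(* Groups are setoid groups (carrier + equivalence relation),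
   so that quotient groups such as ultraproducts need no quotient types. *)
From Stdlib Require Import Setoid.

Set Implicit Arguments.
Unset Strict Implicit.

Record grp := Grp {
  car :> Type;
  geq : car -> car -> Prop;
  gmul : car -> car -> car;
  gone : car;
  ginv : car -> car;
  geq_refl : forall x, geq x x;
  geq_sym : forall x y, geq x y -> geq y x;
  geq_trans : forall x y z, geq x y -> geq y z -> geq x z;
  gmul_compat : forall x x' y y', geq x x' -> geq y y' -> geq (gmul x y) (gmul x' y');
  ginv_compat : forall x x', geq x x' -> geq (ginv x) (ginv x');
  gmulA : forall x y z, geq (gmul (gmul x y) z) (gmul x (gmul y z));
  gmul1 : forall x, geq (gmul gone x) x;
  gmulV : forall x, geq (gmul (ginv x) x) gone
}.

Definition is_hom (G L : grp) (f : G -> L) : Prop :=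
  (forall x y, geq x y -> geq (f x) (f y)) /\
  (forall x y, geq (f (gmul x y)) (gmul (f x) (f y))).

Definition ginjective (G L : grp) (f : G -> L) : Prop :=
  forall x y, geq (f x) (f y) -> geq x y.

Record subgrp (G : grp) := Subgrp {
  smem :> G -> Prop;
  smem_compat : forall x y, geq x y -> smem x -> smem y;
  smem1 : smem (gone G);
  smemM : forall x y, smem x -> smem y -> smem (gmul x y);
  smemV : forall x, smem x -> smem (ginv x)
}.

Record is_ultrafilter (U : (nat -> Prop) -> Prop) : Prop := {
  uf_full : U (fun _ => True);
  uf_empty : ~ U (fun _ => False);
  uf_mono : forall A B : nat -> Prop, (forall i, A i -> B i) -> U A -> U B;
  uf_inter : forall A B : nat -> Prop, U A -> U B -> U (fun i => A i /\ B i);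
  uf_ultra : forall A : nat -> Prop, U A \/ U (fun i => ~ A i)
}.

Definition is_free_ultrafilter (U : (nat -> Prop) -> Prop) : Prop :=
  is_ultrafilter U /\ (forall n : nat, exists A, U A /\ ~ A n).

Section Ultra.
Variables (G : nat -> grp) (U : (nat -> Prop) -> Prop) (hU : is_ultrafilter U).

Definition ucar := forall i, G i.
Definition ueq (x y : ucar) : Prop := U (fun i => geq (x i) (y i)).

Lemma ueq_refl x : ueq x x.
Proof. eapply (uf_mono hU); [|exact (uf_full hU)]; intros i _; apply geq_refl . Qed.
Lemma ueq_sym x y : ueq x y -> ueq y x.
Proof. apply (uf_mono hU); intros i; apply geq_sym. Qed.
Lemma ueq_trans x y z : ueq x y -> ueq y z -> ueq x z.
Proof. intros a b; eapply (uf_mono hU); [|exact (uf_inter hU a b)]; simpl; intros i [p q]; eapply geq_trans; eauto. Qed.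

Definition umul (x y : ucar) : ucar := fun i => gmul (x i) (y i).
Definition uone : ucar := fun i => gone (G i).
Definition uinv (x : ucar) : ucar := fun i => ginv (x i).

Lemma umul_compat x x' y y' : ueq x x' -> ueq y y' -> ueq (umul x y) (umul x' y').
Proof. intros a b; eapply (uf_mono hU); [|exact (uf_inter hU a b)]; simpl; intros i [p q]; apply gmul_compat; auto. Qed.
Lemma uinv_compat x x' : ueq x x' -> ueq (uinv x) (uinv x').
Proof. apply (uf_mono hU); intros i; apply ginv_compat. Qed.
Lemma umulA x y z : ueq (umul (umul x y) z) (umul x (umul y z)).
Proof. eapply (uf_mono hU); [|exact (uf_full hU)]; intros i _; apply gmulA . Qed.
Lemma umul1 x : ueq (umul uone x) x.
Proof. eapply (uf_mono hU); [|exact (uf_full hU)]; intros i _; apply gmul1 . Qed.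
Lemma umulV x : ueq (umul (uinv x) x) uone.
Proof. eapply (uf_mono hU); [|exact (uf_full hU)]; intros i _; apply gmulV . Qed.

Definition ultraprod : grp :=
  @Grp ucar ueq umul uone uinv ueq_refl ueq_sym ueq_trans umul_compat
       uinv_compat umulA umul1 umulV.

Variable H : forall i, subgrp (G i).
Definition usmem (x : ultraprod) : Prop := U (fun i => H i (x i)).

Lemma usmem_compat x y : geq x y -> usmem x -> usmem y.
Proof. intros a b; eapply (uf_mono hU); [|exact (uf_inter hU a b)]; simpl; intros i [p q]; eapply smem_compat; eauto. Qed.
Lemma usmem1 : usmem (gone ultraprod).
Proof. eapply (uf_mono hU); [|exact (uf_full hU)]; intros i _; apply smem1 . Qed.
Lemma usmemM x y : usmem x -> usmem y -> usmem (gmul x y).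
Proof. intros a b; eapply (uf_mono hU); [|exact (uf_inter hU a b)]; simpl; intros i [p q]; apply smemM; auto. Qed.
Lemma usmemV x : usmem x -> usmem (ginv x).
Proof. apply (uf_mono hU); intros i; apply smemV. Qed.

Definition ultrasub : subgrp ultraprod :=
  @Subgrp ultraprod usmem usmem_compat usmem1 usmemM usmemV.
End Ultra.

(** * Amalgamated free product  *_H G  of countably many copies of G over H,
      defined by its universal property: copies indexed by j : nat,
      embeddings inj j : G -> P agreeing on H, universal among such families. *)
Record amalg (G : grp) (H : subgrp G) := Amalg {
  apg :> grp;
  ainj : nat -> G -> apg;
  ainj_hom : forall j, is_hom (ainj j);
  ainj_agree : forall j k (h : G), H h -> geq (ainj j h) (ainj k h);
  auniv : forall (L : grp) (f : nat -> G -> L),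
      (forall j, is_hom (f j)) ->
      (forall j k (h : G), H h -> geq (f j h) (f k h)) ->
      exists phi : apg -> L, is_hom phi /\ forall j g, geq (phi (ainj j g)) (f j g);
  auniq : forall (L : grp) (phi psi : apg -> L), is_hom phi -> is_hom psi ->
      (forall j g, geq (phi (ainj j g)) (psi (ainj j g))) ->
      forall x, geq (phi x) (psi x)
}.

(* Every element of the amalgam [*_H G] can be written as [h g_1 ... g_n]
   with [h] in [H] and the [g_k] outside [H], taken from consecutive copies
   that differ (a reduced form): left multiplication by a generator preserves
   this shape.  The action of the amalgam on normal forms (van der Waerden's
   argument) shows that such an expression equals [1] only if [n = 0] and
   [h = 1].  Now let [phi z = 1] in the ultraproduct and write [z] in reduced
   form.  Being outside [H] and being reduced hold coordinatewise on a
   [U]-large set, so for [U]-many [i] the [i]-th coordinates give a reduced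
   expression of [1] in [*_{H_i} G_i]; hence the word is empty and [h = 1]. *)

From Stdlib Require Import Setoid List PeanoNat Classical ClassicalEpsilon
  PropExtensionality FunctionalExtensionality.
Import ListNotations.

Add Parametric Relation (G : grp) : (car G) (@geq G)
  reflexivity proved by (@geq_refl G) symmetry proved by (@geq_sym G)
  transitivity proved by (@geq_trans G) as geq_rel.
Add Parametric Morphism (G : grp) : (@gmul G)
  with signature (@geq G) ==> (@geq G) ==> (@geq G) as gmul_mor.
Proof. intros; apply gmul_compat; assumption. Qed.
Add Parametric Morphism (G : grp) : (@ginv G)
  with signature (@geq G) ==> (@geq G) as ginv_mor.
Proof. intros; apply ginv_compat; assumption. Qed.

Add Parametric Morphism (G : grp) (S : subgrp G) : (@smem G S)
  with signature (@geq G) ==> iff as smem_mor.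
Proof. intros x y e. split; apply smem_compat; [|symmetry]; assumption. Qed.

Section GroupLemmas.
Context {G : grp}.
Implicit Types x y z : G.

Lemma gmulVr x : geq (gmul x (ginv x)) (gone G).
Proof.
  transitivity (gmul (gmul (ginv (ginv x)) (ginv x)) (gmul x (ginv x))).
  - rewrite gmulV. symmetry. apply gmul1.
  - rewrite gmulA, <- (gmulA (ginv x) x), gmulV, gmul1. apply gmulV.
Qed.

Lemma gmul1r x : geq (gmul x (gone G)) x.
Proof. rewrite <- (gmulV x), <- gmulA, gmulVr. apply gmul1. Qed.

Lemma gmulKV x y : geq (gmul (ginv x) (gmul x y)) y.
Proof. rewrite <- gmulA, gmulV. apply gmul1. Qed.

Lemma gmulVK x y : geq (gmul (gmul x (ginv y)) y) x.
Proof. rewrite gmulA, gmulV. apply gmul1r. Qed.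

Lemma gmulK x y : geq (gmul (gmul x y) (ginv y)) x.
Proof. rewrite gmulA, gmulVr. apply gmul1r. Qed.

Lemma gmulI x y z : geq (gmul z x) (gmul z y) -> geq x y.
Proof. intro e. rewrite <- (gmulKV z x), e. apply gmulKV. Qed.

Lemma ginv_unique x y : geq (gmul x y) (gone G) -> geq x (ginv y).
Proof. intro e. rewrite <- (gmulK x y), e. apply gmul1. Qed.

Lemma ginvK x : geq (ginv (ginv x)) x.
Proof. symmetry. apply ginv_unique, gmulVr. Qed.

Lemma ginv1 : geq (ginv (gone G)) (gone G).
Proof. symmetry. apply ginv_unique, gmul1. Qed.

Lemma ginvM x y : geq (ginv (gmul x y)) (gmul (ginv y) (ginv x)).
Proof.
  symmetry. apply ginv_unique.
  rewrite gmulA, gmulKV. apply gmulV.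
Qed.

Lemma geq_of_mulV1 x y : geq (gmul x (ginv y)) (gone G) -> geq x y.
Proof. intro e. rewrite (ginv_unique _ _ e). apply ginvK. Qed.

Section Subgroup.
Variable S : subgrp G.

Lemma smemMl h x : S h -> S (gmul h x) <-> S x.
Proof.
  intro Sh. split; intro Sx; [|exact (smemM Sh Sx)].
  exact (smem_compat (gmulKV h x) (smemM (smemV Sh) Sx)).
Qed.

Lemma smemMr h x : S h -> S (gmul x h) <-> S x.
Proof.
  intro Sh. split; intro Sx; [|exact (smemM Sx Sh)].
  exact (smem_compat (gmulK x h) (smemM Sx (smemV Sh))).
Qed.

End Subgroup.
End GroupLemmas.

Section Homomorphisms.
Context {G L : grp} (f : G -> L) (f_hom : is_hom f).

Lemma hom1 : geq (f (gone G)) (gone L).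
Proof.
  apply (gmulI _ _ (f (gone G))).
  rewrite gmul1r, <- (proj2 f_hom). apply (proj1 f_hom), gmul1.
Qed.

Lemma homV x : geq (f (ginv x)) (ginv (f x)).
Proof.
  apply ginv_unique. rewrite <- (proj2 f_hom), <- hom1. apply (proj1 f_hom), gmulV.
Qed.

End Homomorphisms.

Section SubgroupGroup.
Context {G : grp} (S : subgrp G).

Definition subgrp_mul (a b : {x : G | S x}) : {x : G | S x} :=
  exist _ _ (smemM (proj2_sig a) (proj2_sig b)).
Definition subgrp_inv (a : {x : G | S x}) : {x : G | S x} :=
  exist _ _ (smemV (proj2_sig a)).

Definition subgrp_grp : grp :=
  @Grp {x : G | S x} (fun a b => geq (proj1_sig a) (proj1_sig b))
    subgrp_mul (exist _ _ (smem1 S)) subgrp_inv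
    (fun a => geq_refl _) (fun a b => @geq_sym G _ _) (fun a b c => @geq_trans G _ _ _)
    (fun a a' b b' => @gmul_compat G _ _ _ _) (fun a a' => @ginv_compat G _ _)
    (fun a b c => gmulA _ _ _) (fun a => gmul1 _) (fun a => gmulV _).

End SubgroupGroup.

Section Symmetric.
Context {X : Type} {xeq : X -> X -> Prop} (xeq_equiv : Equivalence xeq).

Record perm := Perm {
  pfun : X -> X;
  pinv : X -> X;
  pfun_compat : forall x y, xeq x y -> xeq (pfun x) (pfun y);
  pinv_compat : forall x y, xeq x y -> xeq (pinv x) (pinv y);
  pfunK : forall x, xeq (pfun (pinv x)) x;
  pinvK : forall x, xeq (pinv (pfun x)) x
}.

Definition peq (p q : perm) : Prop := forall x, xeq (pfun p x) (pfun q x).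

Definition pmul (p q : perm) : perm.
Proof.
  refine (@Perm (fun x => pfun p (pfun q x)) (fun x => pinv q (pinv p x)) _ _ _ _).
  - intros x y e. do 2 apply pfun_compat. exact e.
  - intros x y e. do 2 apply pinv_compat. exact e.
  - intro x. transitivity (pfun p (pinv p x)); [apply pfun_compat, pfunK | apply pfunK].
  - intro x. transitivity (pinv q (pfun q x)); [apply pinv_compat, pinvK | apply pinvK].
Defined.

Definition pone : perm :=
  @Perm (fun x => x) (fun x => x) (fun x y e => e) (fun x y e => e)
    (fun x => reflexivity x) (fun x => reflexivity x).

Definition pinvp (p : perm) : perm :=
  @Perm (pinv p) (pfun p) (@pinv_compat p) (@pfun_compat p) (@pinvK p) (@pfunK p).

Lemma peq_equiv : Equivalence peq.
Proof.
  split.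
  - intros p x. reflexivity.
  - intros p q e x. symmetry. apply e.
  - intros p q r e e' x. transitivity (pfun q x); [apply e | apply e'].
Qed.

Lemma pmul_compat p p' q q' : peq p p' -> peq q q' -> peq (pmul p q) (pmul p' q').
Proof.
  intros e e' x. simpl.
  transitivity (pfun p (pfun q' x)); [apply pfun_compat, e' | apply e].
Qed.

Lemma pinvp_compat p p' : peq p p' -> peq (pinvp p) (pinvp p').
Proof.
  intros e x. simpl. transitivity (pinv p (pfun p (pinv p' x))).
  - apply pinv_compat. symmetry. transitivity (pfun p' (pinv p' x)); [apply e | apply pfunK].
  - apply pinvK.
Qed.

Definition Sym : grp :=
  @Grp perm peq pmul pone pinvp
    (@Equivalence_Reflexive _ _ peq_equiv) (@Equivalence_Symmetric _ _ peq_equiv)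
    (@Equivalence_Transitive _ _ peq_equiv) pmul_compat pinvp_compat
    (fun p q r x => reflexivity _) (fun p x => reflexivity _) (fun p x => pinvK p x).

End Symmetric.

Section AmalgGeneration.
Context {G : grp} {H : subgrp G} (P : amalg H).

Lemma ainjM_agree j k g h :
  H h -> geq (gmul (ainj P j g) (ainj P k h)) (ainj P j (gmul g h)).
Proof. intro Hh. rewrite (ainj_agree P k j Hh). symmetry. apply (proj2 (ainj_hom P j)). Qed.

Lemma amalg_generated (S : subgrp P) : (forall j g, S (ainj P j g)) -> forall a, S a.
Proof.
  intros Sgen.
  pose (gen j g := exist S (ainj P j g) (Sgen j g) : subgrp_grp S).
  destruct (auniv P (f := gen)) as [psi [psi_hom psi_gen]].
  - intro j. split; [exact (proj1 (ainj_hom P j)) | exact (proj2 (ainj_hom P j))].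
  - intros j k h Hh. exact (ainj_agree P j k Hh).
  - intro a.
    assert (E : geq (proj1_sig (psi a)) a).
    { refine (auniq (phi := fun a => proj1_sig (psi a)) (psi := fun a => a) _ _ _ a).
      - split; intros; apply psi_hom; assumption.
      - split; intros; [assumption | reflexivity].
      - intros j g. exact (psi_gen j g). }
    exact (smem_compat E (proj2_sig (psi a))).
Qed.

(* The [a] with [R (a b)] and [R (a^-1 b)] whenever [R b] form a subgroup
   containing the generators. *)
Lemma amalg_ind (R : P -> Prop) :
  (forall a b, geq a b -> R a -> R b) -> R (gone P) ->
  (forall j g a, R a -> R (gmul (ainj P j g) a)) -> forall a, R a.
Proof.
  intros R_compat R1 R_gen.
  pose (stable a := forall b, R b -> R (gmul a b) /\ R (gmul (ginv a) b)).
  assert (stable_compat : forall a a', geq a a' -> stable a -> stable a').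
  { intros a a' e Sa b Rb. destruct (Sa b Rb) as [Rab RVab].
    split; [apply (R_compat _ _ (gmul_compat e (geq_refl b)) Rab)
           |apply (R_compat _ _ (gmul_compat (ginv_compat e) (geq_refl b)) RVab)]. }
  assert (stable1 : stable (gone P)).
  { intros b Rb. split; apply (R_compat b); try exact Rb; symmetry; [|rewrite ginv1]; apply gmul1. }
  assert (stableM : forall a a', stable a -> stable a' -> stable (gmul a a')).
  { intros a a' Sa Sa' b Rb. split.
    - apply (R_compat _ _ (geq_sym (gmulA a a' b))), Sa, Sa', Rb.
    - apply (R_compat (gmul (ginv a') (gmul (ginv a) b))).
      + rewrite ginvM. symmetry. apply gmulA.
      + apply Sa', Sa, Rb. }
  assert (stableV : forall a, stable a -> stable (ginv a)).
  { intros a Sa b Rb. split; [apply Sa, Rb|].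
    apply (R_compat (gmul a b)); [rewrite ginvK; reflexivity | apply Sa, Rb]. }
  pose (T := Subgrp stable_compat stable1 stableM stableV).
  assert (stable_gen : forall j g, T (ainj P j g)).
  { intros j g b Rb. split; [apply R_gen, Rb|].
    apply (R_compat (gmul (ainj P j (ginv g)) b)); [|apply R_gen, Rb].
    rewrite (homV _ (ainj_hom P j)). reflexivity. }
  intro a. apply (R_compat (gmul a (gone P))); [apply gmul1r|].
  exact (proj1 (amalg_generated T stable_gen a (gone P) R1)).
Qed.

End AmalgGeneration.

Definition head_neq {A : Type} (j : nat) (w : list (nat * A)) : Prop :=
  hd_error (map fst w) <> Some j.

Section ReducedWords.
Context {G : grp}.

Fixpoint reduced (H : subgrp G) (w : list (nat * G)) : Prop :=
  match w with
  | [] => True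
  | (j, g) :: w' => ~ H g /\ head_neq j w' /\ reduced H w'
  end.

Context {H : subgrp G} (P : amalg H).

Fixpoint eval (w : list (nat * G)) : P :=
  match w with
  | [] => gone P
  | (j, g) :: w' => gmul (ainj P j g) (eval w')
  end.

(* The copies agree on [H], so putting the [H]-part in copy [0] is no restriction. *)
Definition reduced_form (a : P) : Prop :=
  exists h w, H h /\ reduced H w /\ geq a (gmul (ainj P 0 h) (eval w)).

Lemma reduced_form_compat a b : geq a b -> reduced_form a -> reduced_form b.
Proof. intros e (h & w & Hh & rw & ea). exists h, w. rewrite <- e. auto. Qed.

Lemma reduced_form_eval w : reduced H w -> reduced_form (eval w).
Proof.
  intro rw. exists (gone G), w. split; [apply smem1 | split; [exact rw|]].
  rewrite (hom1 _ (ainj_hom P 0)). symmetry. apply gmul1.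
Qed.

Lemma reduced_form_ainj_eval j g w :
  reduced H w -> reduced_form (gmul (ainj P j g) (eval w)).
Proof.
  intro rw. destruct (classic (H g)) as [Hg | nHg].
  { exists g, w. repeat split; try assumption. rewrite (ainj_agree P j 0 Hg). reflexivity. }
  destruct w as [|[k c] w'].
  { apply (reduced_form_eval [(j, g)]). simpl. intuition discriminate. }
  destruct (Nat.eq_dec k j) as [-> | kj].
  - destruct rw as (nHc & hw' & rw').
    apply (reduced_form_compat (gmul (ainj P j (gmul g c)) (eval w'))).
    { simpl. rewrite <- gmulA, <- (proj2 (ainj_hom P j)). reflexivity. }
    destruct (classic (H (gmul g c))) as [Hgc | nHgc].
    + exists (gmul g c), w'. repeat split; try assumption.
      rewrite (ainj_agree P j 0 Hgc). reflexivity.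
    + apply (reduced_form_eval ((j, gmul g c) :: w')). simpl. auto.
  - apply (reduced_form_eval ((j, g) :: (k, c) :: w')).
    split; [exact nHg | split; [unfold head_neq; simpl; congruence | exact rw]].
Qed.

Lemma reduced_formP a : reduced_form a.
Proof.
  revert a. apply amalg_ind.
  - exact reduced_form_compat.
  - exact (reduced_form_eval [] I).
  - intros j g a (h & w & Hh & rw & ea).
    apply (reduced_form_compat (gmul (ainj P j (gmul g h)) (eval w))).
    + rewrite ea, <- gmulA, (ainjM_agree P j 0 g h Hh). reflexivity.
    + exact (reduced_form_ainj_eval j _ _ rw).
Qed.

End ReducedWords.

Section NormalForm.
Context {G : grp} (H : subgrp G).

Definition rep (y : G) : G := epsilon (inhabits (gone G)) (fun c => H (gmul y (ginv c))).

Lemma rep_spec y : H (gmul y (ginv (rep y))).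
Proof.
  apply (epsilon_spec (inhabits (gone G)) (fun c => H (gmul y (ginv c)))).
  exists y. rewrite gmulVr. apply smem1.
Qed.

Lemma rep_eq y y' : H (gmul y (ginv y')) -> rep y = rep y'.
Proof.
  intro Hyy'. unfold rep. f_equal.
  apply functional_extensionality; intro c. apply propositional_extensionality.
  rewrite <- (smemMl _ _ (gmul y' (ginv c)) Hyy'), gmulA, gmulKV. reflexivity.
Qed.

Lemma rep_compat y y' : geq y y' -> rep y = rep y'.
Proof. intro e. apply rep_eq. rewrite e, gmulVr. apply smem1. Qed.

Lemma rep_Hmul h y : H h -> rep (gmul h y) = rep y.
Proof. intro Hh. apply rep_eq. rewrite gmulK. exact Hh. Qed.

Lemma rep_idem y : rep (rep y) = rep y.
Proof.
  apply rep_eq. rewrite <- ginvK, ginvM, ginvK. exact (smemV (rep_spec y)).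
Qed.

Lemma rep_notin y : ~ H y -> ~ H (rep y).
Proof. intros nHy Hr. apply nHy. rewrite <- (smemMr _ _ y (smemV Hr)). apply rep_spec. Qed.

(* A pair [(h, [(j_1, c_1); ...; (j_n, c_n)])] with [valid] stands for
   [h c_1 ... c_n], where [h] is in [H] and the [c_k] are the chosen
   representatives [rep] of right cosets of [H] other than [H], from
   consecutive copies that differ.  [act j g] is left multiplication by [g]
   in copy [j]: [peel] merges a leading letter of copy [j] into the
   [H]-part, and [norm] splits it off again. *)
Fixpoint normal (w : list (nat * G)) : Prop :=
  match w with
  | [] => True
  | (j, c) :: w' => ~ H c /\ rep c = c /\ head_neq j w' /\ normal w'
  end.

Definition valid (x : G * list (nat * G)) : Prop := H (fst x) /\ normal (snd x).

Definition nf_eq (x y : G * list (nat * G)) : Prop := geq (fst x) (fst y) /\ snd x = snd y.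

Instance nf_eq_equiv : Equivalence nf_eq.
Proof.
  split.
  - intro x. split; reflexivity.
  - intros x y [e e']. split; symmetry; assumption.
  - intros x y z [e e'] [f f']. split; [rewrite e | rewrite e']; assumption.
Qed.

Definition norm (j : nat) (y : G) (w : list (nat * G)) : G * list (nat * G) :=
  if excluded_middle_informative (H y) then (y, w)
  else (gmul y (ginv (rep y)), (j, rep y) :: w).

Definition peel (j : nat) (x : G * list (nat * G)) : G * list (nat * G) :=
  match x with
  | (h, (k, c) :: w) => if Nat.eq_dec k j then (gmul h c, w) else x
  | _ => x
  end.

Definition act (j : nat) (g : G) (x : G * list (nat * G)) : G * list (nat * G) :=
  norm j (gmul g (fst (peel j x))) (snd (peel j x)).

Lemma norm_in j y w : H y -> norm j y w = (y, w).
Proof. unfold norm. destruct (excluded_middle_informative (H y)); tauto. Qed.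

Lemma norm_notin j y w :
  ~ H y -> norm j y w = (gmul y (ginv (rep y)), (j, rep y) :: w).
Proof. unfold norm. destruct (excluded_middle_informative (H y)); tauto. Qed.

Lemma norm_valid j y w : normal w -> head_neq j w -> valid (norm j y w).
Proof.
  intros nw hw. destruct (classic (H y)) as [Hy | nHy].
  - rewrite norm_in by exact Hy. split; assumption.
  - rewrite norm_notin by exact nHy.
    split; [apply rep_spec | repeat split; auto using rep_notin, rep_idem].
Qed.

Lemma peel_valid j x : valid x -> normal (snd (peel j x)) /\ head_neq j (snd (peel j x)).
Proof.
  destruct x as [h [|[k c] w]]; intros [Hh nw]; simpl in *.
  - split; [exact I | discriminate].
  - destruct (Nat.eq_dec k j) as [-> | kj]; simpl.
    + tauto.
    + split; [exact nw | unfold head_neq; simpl; congruence].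
Qed.

Lemma act_valid j g x : valid x -> valid (act j g x).
Proof. intro v. destruct (peel_valid j _ v). apply norm_valid; assumption. Qed.

Lemma peel_id j x : head_neq j (snd x) -> peel j x = x.
Proof.
  destruct x as [h [|[k c] w]]; simpl; [reflexivity|].
  intro hw. destruct (Nat.eq_dec k j) as [-> | _]; [contradiction hw; reflexivity | reflexivity].
Qed.

Lemma norm_compat j y y' w : geq y y' -> nf_eq (norm j y w) (norm j y' w).
Proof.
  intro e. destruct (classic (H y)) as [Hy | nHy].
  - rewrite !norm_in by (rewrite <- ?e; exact Hy). split; [exact e | reflexivity].
  - rewrite !norm_notin by (rewrite <- ?e; exact nHy).
    rewrite (rep_compat _ _ e). split; simpl; [rewrite e |]; reflexivity.
Qed.

Lemma peel_compat j x x' : nf_eq x x' -> nf_eq (peel j x) (peel j x').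
Proof.
  destruct x as [h w], x' as [h' w']; intros [e ew]; simpl in e, ew; subst w'.
  destruct w as [|[k c] w]; simpl; [split; [exact e | reflexivity]|].
  destruct (Nat.eq_dec k j); split; simpl; try rewrite e; reflexivity.
Qed.

Lemma act_compat j g g' x x' : geq g g' -> nf_eq x x' -> nf_eq (act j g x) (act j g' x').
Proof.
  intros e r. destruct (peel_compat j _ _ r) as [e1 e2]. unfold act. rewrite e2.
  apply norm_compat. rewrite e, e1. reflexivity.
Qed.

Lemma act_norm j g y w : head_neq j w -> nf_eq (act j g (norm j y w)) (norm j (gmul g y) w).
Proof.
  intro hw. destruct (classic (H y)) as [Hy | nHy].
  - rewrite norm_in by exact Hy. unfold act. rewrite peel_id by exact hw. reflexivity.
  - rewrite norm_notin by exact nHy. unfold act. simpl.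
    destruct (Nat.eq_dec j j) as [_ | jj]; [|contradiction jj; reflexivity].
    apply norm_compat. simpl. rewrite gmulVK. reflexivity.
Qed.

Lemma act_mul j g1 g2 x : valid x -> nf_eq (act j (gmul g1 g2) x) (act j g1 (act j g2 x)).
Proof.
  intro v. destruct (peel_valid j _ v) as [_ hw].
  transitivity (norm j (gmul g1 (gmul g2 (fst (peel j x)))) (snd (peel j x))).
  - apply norm_compat, gmulA.
  - symmetry. apply act_norm, hw.
Qed.

Lemma norm_Hmul j h y w :
  H h -> nf_eq (norm j (gmul h y) w) (gmul h (fst (norm j y w)), snd (norm j y w)).
Proof.
  intro Hh. destruct (classic (H y)) as [Hy | nHy].
  - rewrite !norm_in by (rewrite ?(smemMl _ _ _ Hh); exact Hy). reflexivity.
  - rewrite !norm_notin by (rewrite ?(smemMl _ _ _ Hh); exact nHy).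
    rewrite (rep_Hmul _ y Hh). split; simpl; [apply gmulA | reflexivity].
Qed.

Lemma norm_peel j x : valid x -> nf_eq (norm j (fst (peel j x)) (snd (peel j x))) x.
Proof.
  destruct x as [h [|[k c] w]]; intros [Hh nw]; simpl in *.
  - rewrite norm_in by exact Hh. reflexivity.
  - destruct (Nat.eq_dec k j) as [-> | _]; simpl.
    + destruct nw as (nHc & rc & _).
      rewrite norm_notin by (rewrite (smemMl _ _ _ Hh); exact nHc).
      rewrite (rep_Hmul _ c Hh), rc. split; [apply gmulK | reflexivity].
    + rewrite norm_in by exact Hh. reflexivity.
Qed.

Lemma act_H j h x : H h -> valid x -> nf_eq (act j h x) (gmul h (fst x), snd x).
Proof.
  intros Hh v. unfold act. rewrite (norm_Hmul _ _ _ _ Hh).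
  destruct (norm_peel j _ v) as [e1 e2]. split; simpl; [rewrite e1; reflexivity | exact e2].
Qed.

Lemma act_cons j g x : valid x -> head_neq j (snd x) -> ~ H g ->
  snd (act j g x) = (j, rep (gmul g (fst x))) :: snd x.
Proof.
  intros [Hx _] hw nHg. unfold act. rewrite peel_id by exact hw.
  rewrite norm_notin by (rewrite (smemMr _ _ _ Hx); exact nHg). reflexivity.
Qed.

Definition NF : Type := {x : G * list (nat * G) | valid x}.
Definition NF_eq (a b : NF) : Prop := nf_eq (proj1_sig a) (proj1_sig b).

Instance NF_eq_equiv : Equivalence NF_eq.
Proof.
  unfold NF_eq. split.
  - intro a. reflexivity.
  - intros a b e. symmetry. exact e.
  - intros a b c e e'. etransitivity; eassumption.
Qed.

Definition actNF (j : nat) (g : G) (a : NF) : NF :=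
  exist _ (act j g (proj1_sig a)) (act_valid j g _ (proj2_sig a)).

Lemma actNF_compat j g a b : NF_eq a b -> NF_eq (actNF j g a) (actNF j g b).
Proof. apply act_compat. reflexivity. Qed.

Lemma actNF_cancel j g g' : geq (gmul g g') (gone G) -> forall a, NF_eq (actNF j g (actNF j g' a)) a.
Proof.
  intros e [x v]. unfold NF_eq. simpl.
  rewrite <- (act_mul _ _ _ _ v), (act_compat j _ _ x x e (reflexivity x)).
  rewrite (act_H _ _ _ (smem1 H) v). split; [apply gmul1 | reflexivity].
Qed.

Definition actP (j : nat) (g : G) : Sym NF_eq_equiv :=
  @Perm NF NF_eq (actNF j g) (actNF j (ginv g)) (actNF_compat j g) (actNF_compat j (ginv g))
    (actNF_cancel j _ _ (gmulVr g)) (actNF_cancel j _ _ (gmulV g)).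

Lemma actP_hom j : is_hom (actP j).
Proof.
  split.
  - intros g g' e a. apply act_compat; [exact e | reflexivity].
  - intros g g' [x v]. apply (act_mul _ _ _ _ v).
Qed.

Lemma actP_agree j k h : H h -> geq (actP j h) (actP k h).
Proof.
  intros Hh [x v]. unfold NF_eq. simpl. rewrite !(act_H _ _ _ Hh v). reflexivity.
Qed.

Definition nf_base : NF := exist valid (gone G, []) (conj (smem1 H) I).

Section Orbit.
Context {P : amalg H} (Phi : P -> Sym NF_eq_equiv) (Phi_hom : is_hom Phi)
  (Phi_ainj : forall j g, geq (Phi (ainj P j g)) (actP j g)).

Definition orbit (a : P) : G * list (nat * G) := proj1_sig (pfun (Phi a) nf_base).

Lemma orbit1 : nf_eq (orbit (gone P)) (gone G, []).
Proof. exact (hom1 _ Phi_hom nf_base). Qed.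

Lemma orbit_ainjM j g a : nf_eq (orbit (gmul (ainj P j g) a)) (act j g (orbit a)).
Proof. exact (transitivity (proj2 Phi_hom _ _ nf_base) (Phi_ainj j g _)). Qed.

Lemma orbit_eval_indices w : reduced H w -> map fst (snd (orbit (eval P w))) = map fst w.
Proof.
  induction w as [|[j g] w IH]; intro rw.
  - exact (f_equal (map fst) (proj2 orbit1)).
  - destruct rw as (nHg & hw & rw). cbn [eval].
    rewrite (proj2 (orbit_ainjM j g _)), act_cons; [cbn; rewrite IH; auto | exact (proj2_sig _) | | exact nHg].
    unfold head_neq. rewrite IH by exact rw. exact hw.
Qed.

End Orbit.

Theorem amalg_normal_form (P : amalg H) j h w :
  H h -> reduced H w -> geq (gmul (ainj P j h) (eval P w)) (gone P) ->
  w = [] /\ geq h (gone G).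
Proof.
  intros Hh rw e.
  destruct (auniv P (f := actP) actP_hom actP_agree) as [Phi [Phi_hom Phi_ainj]].
  assert (E : nf_eq (gmul h (fst (orbit Phi (eval P w))), snd (orbit Phi (eval P w))) (gone G, [])).
  { rewrite <- (act_H j _ (orbit Phi (eval P w)) Hh (proj2_sig _)), <- (orbit_ainjM _ Phi_hom Phi_ainj).
    rewrite <- (orbit1 _ Phi_hom). exact (proj1 Phi_hom _ _ e nf_base). }
  destruct E as [Eh Ew]. simpl in Eh, Ew.
  assert (w_nil : w = []).
  { apply map_eq_nil with (f := fst). rewrite <- (orbit_eval_indices _ Phi_hom Phi_ainj w rw), Ew.
    reflexivity. }
  subst w. split; [reflexivity|].
  rewrite <- Eh, (proj1 (orbit1 _ Phi_hom)). symmetry. apply gmul1r.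
Qed.

End NormalForm.

Section UltraproductWords.
Context {G : nat -> grp} {U : (nat -> Prop) -> Prop} (hU : is_ultrafilter U)
  (H : forall i, subgrp (G i)).

Lemma ultrafilter_nonempty (S : nat -> Prop) : U S -> exists i, S i.
Proof.
  intro US. apply NNPP. intro none. apply (uf_empty hU).
  apply (uf_mono hU (A := S)); [|exact US]. intros i Si. apply none. exists i. exact Si.
Qed.

Definition coord_word (i : nat) (w : list (nat * ultraprod G hU)) : list (nat * G i) :=
  map (fun p => (fst p, snd p i)) w.

Lemma reduced_coord_word w :
  reduced (ultrasub hU H) w -> U (fun i => reduced (H i) (coord_word i w)).
Proof.
  induction w as [|[j g] w IH]; simpl.
  - intros _. apply (uf_mono hU (A := fun _ => True)); [auto | exact (uf_full hU)].
  - intros (nHg & hw & rw).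
    assert (Unotin : U (fun i => ~ H i (g i))).
    { destruct (uf_ultra hU (fun i => H i (g i))) as [Hg | nHg']; [contradiction | exact nHg']. }
    apply (uf_mono hU (A := fun i => ~ H i (g i) /\ reduced (H i) (coord_word i w)));
      [| exact (uf_inter hU Unotin (IH rw))].
    intros i [nHgi rwi]. repeat split; try assumption.
    unfold head_neq, coord_word in *. rewrite map_map. exact hw.
Qed.

Lemma hom_eval_coord (A : amalg (ultrasub hU H)) (B : forall i, amalg (H i))
    (phi : A -> ultraprod (fun i => apg (B i)) hU) :
  is_hom phi ->
  (forall j g, geq (phi (ainj A j g)) (fun i => ainj (B i) j (g i))) ->
  forall w, geq (phi (eval A w)) (fun i => eval (B i) (coord_word i w)).
Proof.
  intros phi_hom phi_ainj. induction w as [|[j g] w IH]; cbn [eval].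
  - exact (hom1 _ phi_hom).
  - rewrite (proj2 phi_hom), phi_ainj, IH. reflexivity.
Qed.

Lemma ultraprod_amalg_normal_form (B : forall i, amalg (H i)) (h : ultraprod G hU) w :
  ultrasub hU H h -> reduced (ultrasub hU H) w ->
  geq (g := ultraprod (fun i => apg (B i)) hU)
      (fun i => gmul (ainj (B i) 0 (h i)) (eval (B i) (coord_word i w))) (gone _) ->
  w = [] /\ geq h (gone _).
Proof.
  intros Hh rw E.
  assert (Uform : U (fun i => coord_word i w = [] /\ geq (h i) (gone _))).
  { apply (uf_mono hU (A := fun i => H i (h i) /\ reduced (H i) (coord_word i w) /\
      geq (gmul (ainj (B i) 0 (h i)) (eval (B i) (coord_word i w))) (gone _))).
    - intros i (Hhi & rwi & Ei). exact (amalg_normal_form _ _ _ _ _ Hhi rwi Ei).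
    - exact (uf_inter hU Hh (uf_inter hU (reduced_coord_word w rw) E)). }
  split.
  - destruct (ultrafilter_nonempty _ Uform) as [i [wi _]]. exact (map_eq_nil _ _ wi).
  - exact (uf_mono hU (fun i => @proj2 _ _) Uform).
Qed.

End UltraproductWords.

Theorem lemma2p5
  (G : nat -> grp) (H : forall i, subgrp (G i))
  (U : (nat -> Prop) -> Prop) (hU : is_free_ultrafilter U)
  (A : amalg (ultrasub (proj1 hU) H))
  (B : forall i, amalg (H i))
  (phi : A -> ultraprod (fun i => apg (B i)) (proj1 hU)) :
  is_hom phi ->
  (forall (j : nat) (g : ultraprod G (proj1 hU)),
      geq (phi (ainj A j g)) (fun i => ainj (B i) j (g i))) ->
  ginjective phi.
Proof.
  intros phi_hom phi_ainj x y exy.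
  apply geq_of_mulV1.
  destruct (reduced_formP A (gmul x (ginv y))) as (h & w & Hh & rw & ez).
  assert (phi_z : geq (phi (gmul (ainj A 0 h) (eval A w))) (gone _)).
  { rewrite <- (proj1 phi_hom _ _ ez), (proj2 phi_hom), (homV _ phi_hom), exy. apply gmulVr. }
  rewrite (proj2 phi_hom), phi_ainj, (hom_eval_coord _ H A B phi phi_hom phi_ainj) in phi_z.
  destruct (ultraprod_amalg_normal_form _ H B h w Hh rw phi_z) as [-> h1].
  rewrite ez. simpl eval.
  rewrite (proj1 (ainj_hom A 0) _ _ h1), (hom1 _ (ainj_hom A 0)). apply gmul1.
Qed.
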